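(* Let $\Sigma$ be an alphabet, $n\ge2$, and $p$ an $n$-gram LM over $\Sigma$. There exists a hard attention transformer LM weakly equivalent to $p$ whose contextual representations (the vectors $x$ produced by the static encoding and by every head and layer) have dimension $O(n|\Sigma|)$, whose final representation $F(x^L)$ fed to the output matrix has dimension $O(|\Sigma|^{n-1})$, and such that, when processing a string $y\in\Sigma^*$, every entry of every contextual representation can be represented with $O(\log_2|y|)$ bits.
   Context: Let $\Sigma$ be a finite nonempty alphabet and let $\mathrm{EOS},\mathrm{BOS}\notin\Sigma$ be distinct symbols; put $\overline\Sigma=\Sigma\cup\{\mathrm{EOS}\}$ and $\underline\Sigma=\Sigma\cup\{\mathrm{BOS}\}$. A language model (LM) over $\Sigma$ is a probability distribution $p$ on $\Sigma^*$ given autoregressively by $p(y)=p(\mathrm{EOS}\mid y)\prod_{t=1}^{|y|}p(y_t\mid y_{<t})$, where each $p(\cdot\mid y_{<t})$ is a probability distribution on $\overline\Sigma$. Two LMs $p,q$ over $\Sigma$ are weakly equivalent if $p(y)=q(y)$ for all $y\in\Sigma^*$. For $n\ge2$, an $n$-gram LM is an LM such that, after left-padding every string with $n-1$ copies of $\mathrm{BOS}$, $p(y_t\mid y_{<t})=p(y_t\mid y_{t-n+1}\cdots y_{t-1})$ depends only on the history $y_{t-n+1}\cdots y_{t-1}\in\underline\Sigma^{\,n-1}$ (the last $n-1$ symbols of the padded prefix); the distributions on $\overline\Sigma$ assigned to the histories are arbitrary (probabilities may be $0$). Transformers. A transformer of width $D$ processes a string $w=w_1\cdots w_T$ over $\underline\Sigma$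 (for an LM, the prefix $y_{<t}$ left-padded with $n-1$ copies of BOS) as follows. A static encoding gives $x^0_j=r(w_j,j)\in\mathbb R^D$ for a function $r:\underline\Sigma\times\mathbb N\to\mathbb R^D$. An attention head with query, key, value, output functions $Q,K,V,O:\mathbb R^D\to\mathbb R^D$, scoring function $f:\mathbb R^D\times\mathbb R^D\to\mathbb R$ and normalization function $\pi$ maps $(x_1,\dots,x_T)$ to $(z_1,\dots,z_T)$ where, for each position $s$, $q_s=Q(x_s)$, $k_j=K(x_j)$, $v_j=V(x_j)$, $\sigma=\pi(f(q_s,k_1),\dots,f(q_s,k_s))$ (a probability vector), $a_s=\sum_{j=1}^s\sigma_jv_j+x_s$, $z_s=O(a_s)+a_s$. A layer with $H$ heads applies $H$ heads to the same input and maps the concatenation of the $H$ outputs at each position back to $\mathbb R^D$ with a head-combining function $\mathcal H:\mathbb R^{HD}\to\mathbb R^D$; an $L$-layer transformer composes $L$ layers after $r$. Given a final function $F:\mathbb R^D\to\mathbb R^D$ and an output matrix $E\in(\mathbb R\cup\{-\infty\})^{|\overline\Sigma|\times D}$ (with $\exp(-\infty)=0$), the transformer LM sets $p(y_t\mid y_{<t})=\mathrm{softmax}(E\,F(x^L))_{y_t}$, where $x^L$ is the last-layer representation at the last position of the padded prefix $y_{<t}$. In this definition $r,Q,K,V,O,f,\mathcal H,F$ are arbitrary functions. Hard attention means $\pi=\mathrm{hardmax}$, where $\mathrm{hardmax}(x)_d=1/m$ if $d\in\arg\max x$ with $m=|\arg\max x|$, and $0$ otherwise. Sparse attention means $\pi=\mathrm{sparsemax}$,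 $\mathrm{sparsemax}(x)=\arg\min_{p\in\Delta}\|p-x\|_2^2$ over the probability simplex $\Delta$. *)

From HB Require Import structures.
From mathcomp Require Import all_boot all_order all_algebra.
From mathcomp Require Import reals constructive_ereal sequences.

Unset Implicit Arguments.
Unset Strict Implicit.
Unset Printing Implicit Defensive.

Import Order.TTheory GRing.Theory Num.Theory.
Local Open Scope ring_scope.

(* Conventions:
   - the alphabet Sigma is a finType;
   - overline Sigma = option Sigma, with None = EOS;
   - underline Sigma = option Sigma, with None = BOS;
   - R^D is represented as functions 'I_D -> R;
   - positions of a string w (over underline Sigma) are 0 .. size w - 1
     internally; the static encoding receives the 1-based position j.+1. *)

Section Transformers.
Variable R : realType.

Definition vec (D : nat) := 'I_D -> R.

Definition vzero D : vec D := fun _ => 0.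
Arguments vzero D _ : clear implicits.
Definition vadd D (u v : vec D) : vec D := fun i => u i + v i.
Definition vscale D (c : R) (u : vec D) : vec D := fun i => c * u i.

Definition hardmax_weight (score : nat -> R) (s j : nat) : R :=
  let M := foldr Num.max (score 0%N) [seq score k | k <- iota 0 s.+1] in
  let A := [seq k <- iota 0 s.+1 | score k == M] in
  if j \in A then (size A)%:R^-1 else 0.

Record head (D : nat) := Head {
  hQ : vec D -> vec D;
  hK : vec D -> vec D;
  hV : vec D -> vec D;
  hO : vec D -> vec D;
  hf : vec D -> vec D -> R }.
Arguments hQ {D} h _.
Arguments hK {D} h _.
Arguments hV {D} h _.
Arguments hO {D} h _.
Arguments hf {D} h _ _.

Definition head_apply {D} (h : head D) (xs : seq (vec D)) : seq (vec D) :=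
  [seq
    (let xsv := nth (vzero D) xs s in
     let q := hQ h xsv in
     let score j := hf h q (hK h (nth (vzero D) xs j)) in
     let a := vadd D (\big[@vadd D/vzero D]_(j < s.+1)
                      vscale D (hardmax_weight score s j) (hV h (nth (vzero D) xs j)))
                   xsv in
     vadd D (hO h a) a)
  | s <- iota 0 (size xs)].

Record layer (D : nat) := Layer {
  lH : nat;
  lheads : 'I_lH -> head D;
  lcomb : ('I_lH -> vec D) -> vec D }.
Arguments lheads {D} l _.
Arguments lH {D} l.
Arguments lcomb {D} l _.

Definition layer_apply {D} (l : layer D) (xs : seq (vec D)) : seq (vec D) :=
  [seq lcomb l (fun h => nth (vzero D) (head_apply (lheads l h) xs) s)
  | s <- iota 0 (size xs)].

(* A hard attention transformer LM over Sigma: width tD, static encoding tr,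
   layers, final function tF : R^tD -> R^tD' and output matrix tE with rows
   indexed by overline Sigma and entries in \bar R (entries must not be +oo,
   see transformer_wf). *)
Record transformer (Sig : finType) := Transformer {
  tD : nat;
  tr : option Sig -> nat -> vec tD;
  tlayers : seq (layer tD);
  tD' : nat;
  tF : vec tD -> vec tD';
  tE : option Sig -> 'I_tD' -> \bar R }.
Arguments tr {Sig} t _ _.
Arguments tF {Sig} t _ _.
Arguments tE {Sig} t _ _.
Arguments tlayers {Sig} t.
Arguments tD {Sig} t.
Arguments tD' {Sig} t.

Variable Sig : finType.

Definition static_enc (T : transformer Sig) (w : seq (option Sig)) : seq (vec (tD T)) :=
  [seq tr T (nth None w j) j.+1 | j <- iota 0 (size w)].

Definition run_layers {D} (ls : seq (layer D)) (xs : seq (vec D)) : seq (vec D) :=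
  foldl (fun ys l => layer_apply l ys) xs ls.

Fixpoint all_reps {D} (ls : seq (layer D)) (xs : seq (vec D)) : seq (vec D) :=
  match ls with
  | [::] => xs
  | l :: ls' =>
      xs ++ flatten [seq head_apply (lheads l h) xs | h <- enum 'I_(lH l)]
         ++ all_reps ls' (layer_apply l xs)
  end.

Definition transformer_reps (T : transformer Sig) (w : seq (option Sig)) :=
  all_reps (tlayers T) (static_enc T w).

Definition final_rep (T : transformer Sig) (w : seq (option Sig)) : vec (tD' T) :=
  tF T (last (vzero _) (run_layers (tlayers T) (static_enc T w))).

Definition logit (T : transformer Sig) (w : seq (option Sig)) (a : option Sig) : \bar R :=
  (\sum_(j < tD' T) (tE T a j * (final_rep T w j)%:E))%E.

Definition expE (x : \bar R) : R := if x is (r%:E)%E then expR r else 0.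

Definition tcond (T : transformer Sig) (w : seq (option Sig)) (a : option Sig) : R :=
  expE (logit T w a) / \sum_(b : option Sig) expE (logit T w b).

Definition pad (n : nat) (y : seq Sig) : seq (option Sig) :=
  nseq n.-1 None ++ map Some y.

(* the transformer LM is well defined on every padded prefix: E has entries in
   R u {-oo}, the product E F(x^L) only involves -oo * c with c >= 0 (so it is
   meaningful with -oo * 0 = 0), and the softmax normalizer is positive. *)
Definition transformer_wf (T : transformer Sig) (n : nat) : Prop :=
  (forall a j, tE T a j != +oo%E) /\
  forall y : seq Sig,
    (forall a j, tE T a j = -oo%E -> 0 <= final_rep T (pad n y) j) /\
    0 < \sum_(b : option Sig) expE (logit T (pad n y) b).

Definition autoreg (cond : seq (option Sig) -> option Sig -> R) (n : nat)
  (y : seq Sig) : R :=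
  (\prod_(t < size y) cond (pad n (take t y)) (Some (tnth (in_tuple y) t)))
  * cond (pad n y) None.

Definition tprob (T : transformer Sig) (n : nat) (y : seq Sig) : R :=
  autoreg (tcond T) n y.

Definition ngram_params (n : nat) := (n.-1).-tuple (option Sig) -> option Sig -> R.

Definition is_ngram_lm {n} (ng : ngram_params n) : Prop :=
  (forall h a, 0 <= ng h a) /\ (forall h, \sum_(a : option Sig) ng h a = 1).

Definition history (n : nat) (w : seq (option Sig)) : (n.-1).-tuple (option Sig) :=
  [tuple nth None w (size w - n.-1 + i) | i < n.-1].

Definition ngprob {n} (ng : ngram_params n) (y : seq Sig) : R :=
  autoreg (fun w a => ng (history n w) a) n y.

End Transformers.

Arguments vzero {R} D _.
Arguments tD {R Sig} t.
Arguments tD' {R Sig} t.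
Arguments transformer_wf {R Sig} T n.
Arguments tprob {R Sig} T n y.
Arguments ngprob {R Sig n} ng y.
Arguments is_ngram_lm {R Sig n} ng.
Arguments transformer_reps {R Sig} T w.
Arguments pad {Sig} n y.
Arguments ngram_params R Sig n : clear implicits.
Arguments transformer R Sig : clear implicits.

Definition bits_repr {R : realType} (b : nat) (x : R) : Prop :=
  exists (p : int) (q : nat),
    (0 < q)%N /\ (absz p <= 2 ^ b)%N /\ (q <= 2 ^ b)%N /\ x = p%:~R / q%:R.

From Pilot Require Import Defs.
From HB Require Import structures.
From mathcomp Require Import all_boot all_order all_algebra.
From mathcomp Require Import reals constructive_ereal sequences exp.
From mathcomp Require Import zify.
Import Order.TTheory GRing.Theory Num.Theory.
Local Open Scope ring_scope.

(* The static encoding records each symbol's code and its position.  Head i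
   of a single layer gives score 1 exactly to the key whose position lies
   n-2-i places before the query, so at the last position hard attention
   retrieves the i-th symbol of the length-(n-1) history; the layer writes
   these n-1 codes into n-1 coordinates.  The final function decodes the
   history and lists, for every next symbol b, ln p(b | history) and the
   indicator of p(b | history) = 0; the output matrix picks the entries of
   the symbol at hand, weighting the indicator by -oo, so the softmax is
   exactly the n-gram distribution.  Every contextual value is a natural
   number at most |Sigma| + |w|, hence needs O(log |y|) bits. *)

#[local] Arguments hQ {R D} h _ _.
#[local] Arguments hK {R D} h _ _.
#[local] Arguments hV {R D} h _ _.
#[local] Arguments hO {R D} h _ _.
#[local] Arguments hf {R D} h _ _.
#[local] Arguments lheads {R D} l _.
#[local] Arguments lcomb {R D} l _ _.
#[local] Arguments tr {R Sig} t _ _ _.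

Lemma nth_map_iota (T : Type) (x0 : T) (f : nat -> T) m k :
  (k < m)%N -> nth x0 [seq f j | j <- iota 0 m] k = f k.
Proof. by move=> km; rewrite (nth_map 0%N) ?size_iota // nth_iota. Qed.

Section HardAttention.
Variable R : realType.

Lemma foldr_max_map_le (score : nat -> R) (x0 M : R) (l : seq nat) :
  x0 <= M -> {in l, forall k, score k <= M} -> foldr Num.max x0 (map score l) <= M.
Proof.
move=> x0M; elim: l => [|a l IH] //= leM.
rewrite ge_max leM ?mem_head //= IH // => k lk.
by apply: leM; rewrite in_cons lk orbT.
Qed.

Lemma foldr_max_map_ge (score : nat -> R) (x0 : R) (l : seq nat) k :
  k \in l -> score k <= foldr Num.max x0 (map score l).
Proof.
elim: l => [|a l IH] //=; rewrite in_cons => /orP[/eqP->|kl].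
  by rewrite le_max lexx.
by rewrite le_max IH ?orbT.
Qed.

Lemma hardmax_weight_argmax {score : nat -> R} {s j0 : nat} : (j0 <= s)%N ->
  (forall k, (k <= s)%N -> k != j0 -> score k < score j0) ->
  forall j, (j <= s)%N -> hardmax_weight R score s j = (j == j0)%:R.
Proof.
move=> j0s argmax j js; rewrite /hardmax_weight.
have j0_in : j0 \in iota 0 s.+1 by rewrite mem_iota.
have le_j0 : {in iota 0 s.+1, forall k, score k <= score j0}.
  move=> k; rewrite mem_iota ltnS => /andP[_ ks].
  by have [->|/(argmax k ks)/ltW] := eqVneq k j0.
have -> : foldr Num.max (score 0%N) [seq score k | k <- iota 0 s.+1] = score j0.
  apply/le_anti; rewrite foldr_max_map_ge // andbT.
  by apply: foldr_max_map_le => //; apply: le_j0; rewrite mem_iota.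
have -> : [seq k <- iota 0 s.+1 | score k == score j0] = [:: j0].
  rewrite -(filter_pred1_uniq (iota_uniq 0 s.+1) j0_in).
  apply: eq_in_filter => k; rewrite mem_iota ltnS => /andP[_ ks] /=.
  have [->|kj0] := eqVneq k j0; first by rewrite eqxx.
  by rewrite lt_eqF // argmax.
by rewrite mem_seq1; case: eqP; rewrite ?invr1.
Qed.

Definition head_attn {D : nat} (h : Defs.head R D) (xs : seq (vec R D)) (s : nat) : vec R D :=
  let score j := hf h (hQ h (nth (vzero D) xs s)) (hK h (nth (vzero D) xs j)) in
  vadd R D (\big[@vadd R D/vzero D]_(j < s.+1)
              vscale R D (hardmax_weight R score s j) (hV h (nth (vzero D) xs j)))
           (nth (vzero D) xs s).

Lemma nth_head_apply (D : nat) (h : Defs.head R D) xs s : (s < size xs)%N ->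
  nth (vzero D) (head_apply R h xs) s = vadd R D (hO h (head_attn h xs s)) (head_attn h xs s).
Proof. exact: nth_map_iota. Qed.

Lemma head_attn_argmax (D : nat) (h : Defs.head R D) xs s j0 i : (j0 <= s)%N ->
  (forall k, (k <= s)%N -> k != j0 ->
     hf h (hQ h (nth (vzero D) xs s)) (hK h (nth (vzero D) xs k))
     < hf h (hQ h (nth (vzero D) xs s)) (hK h (nth (vzero D) xs j0))) ->
  head_attn h xs s i = hV h (nth (vzero D) xs j0) i + nth (vzero D) xs s i.
Proof.
move=> j0s argmax; rewrite /head_attn /vadd; congr (_ + _).
rewrite (big_morph (fun v : vec R D => v i) (id1 := 0) (op1 := +%R)) //.
have weight j : (j <= s)%N -> hardmax_weight R _ s j = (j == j0)%:R :=
  hardmax_weight_argmax j0s argmax j.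
rewrite (bigD1 (Ordinal (j0s : (j0 < s.+1)%N))) //= big1 => [|j jj0].
  by rewrite /vscale weight // eqxx mul1r addr0.
rewrite /vscale weight; last by rewrite -ltnS.
by move: jj0; rewrite -val_eqE /= => /negbTE ->; rewrite mul0r.
Qed.

End HardAttention.

Arguments head_attn_argmax {R D h xs s j0} i.

Section TransformerSemantics.
Variables (R : realType) (Sig : finType).

Lemma size_static_enc (T : transformer R Sig) w : size (static_enc R Sig T w) = size w.
Proof. by rewrite size_map size_iota. Qed.

Lemma nth_static_enc (T : transformer R Sig) w j : (j < size w)%N ->
  nth (vzero _) (static_enc R Sig T w) j = tr T (nth None w j) j.+1.
Proof. exact: nth_map_iota. Qed.

Lemma last_run_layers1 (D : nat) (l : layer R D) xs : (0 < size xs)%N ->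
  last (vzero D) (run_layers R [:: l] xs)
  = lcomb l (fun h => nth (vzero D) (head_apply R (lheads l h) xs) (size xs).-1).
Proof.
move=> xs_gt0; rewrite /run_layers /= -nth_last /layer_apply size_map size_iota.
by rewrite nth_map_iota // prednK.
Qed.

Lemma tcond_eq_distr (T : transformer R Sig) w (p : option Sig -> R) :
  (forall a, expE R (logit R Sig T w a) = p a) -> \sum_a p a = 1 ->
  forall a, tcond R Sig T w a = p a.
Proof.
by move=> logitE p_sum1 a; rewrite /tcond (eq_bigr _ (fun b _ => logitE b)) p_sum1 divr1.
Qed.

Lemma size_pad n (y : seq Sig) : size (pad n y) = (n.-1 + size y)%N.
Proof. by rewrite size_cat size_nseq size_map. Qed.

Lemma eq_autoreg (c1 c2 : seq (option Sig) -> option Sig -> R) n y :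
  (forall y' a, c1 (pad n y') a = c2 (pad n y') a) ->
  autoreg R Sig c1 n y = autoreg R Sig c2 n y.
Proof. by move=> c12; rewrite /autoreg c12; congr (_ * _); apply: eq_bigr. Qed.

End TransformerSemantics.

Lemma card_sum_option_le (A : finType) k : (0 < #|A|)%N -> (0 < k)%N ->
  (#|{: option A + option A}| <= 4 * #|A| ^ k)%N.
Proof.
move=> A_gt0 k_gt0; have : (#|A| <= #|A| ^ k)%N.
  by rewrite -{1}(expn1 #|A|); apply: leq_pexp2l.
by rewrite card_sum !card_option; move: (#|A| ^ k)%N => e; lia.
Qed.

Section LogProbabilityReadout.
Variables (R : realType) (A : finType).

(* [ln 0] is a junk value; it always meets the [-oo] weight of the
   zero-probability indicator. *)
Definition logprob_feature (p : A -> R) (y : A + A) : R :=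
  match y with inl b => ln (p b) | inr b => (p b == 0)%:R end.

Definition logprob_weight (a : A) (y : A + A) : \bar R :=
  match y with
  | inl b => if b == a then 1%E else 0%E
  | inr b => if b == a then -oo%E else 0%E
  end.

Lemma expE_logprob (p : A -> R) a : 0 <= p a ->
  expE R (\sum_(j < #|{: A + A}|)
            (logprob_weight a (enum_val j) * (logprob_feature p (enum_val j))%:E))%E
  = p a.
Proof.
move=> pa_ge0.
rewrite -(big_enum_val (A := {: A + A})
            (fun y => (logprob_weight a y * (logprob_feature p y)%:E)%E)).
rewrite big_sumType /= (bigD1 a) //= [X in (_ + X)%E](bigD1 a) //= !eqxx.
rewrite !big1 => [|b /negbTE->|b /negbTE->]; rewrite ?mul0e // !addr0.
have [pa0|pa_neq0] := eqVneq (p a) 0; first by rewrite mule1 addeNy.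
rewrite mule0 addr0 /= mul1r lnK // posrE lt_def pa_neq0.
by rewrite pa_ge0.
Qed.

Lemma logprob_weight_neq_pinfty a y : logprob_weight a y != +oo%E.
Proof. by case: y => b /=; case: ifP. Qed.

Lemma logprob_feature_ge0 (p : A -> R) a y :
  logprob_weight a y = -oo%E -> 0 <= logprob_feature p y.
Proof. by case: y => b /=; case: ifP => // _ _; rewrite ler0n. Qed.

End LogProbabilityReadout.

Arguments logprob_feature {R A} p y.
Arguments logprob_weight {R A} a y.

Lemma bits_repr_natr (R : realType) b c : (c <= 2 ^ b)%N -> bits_repr b (c%:R : R).
Proof.
move=> c_le; exists c%:Z, 1%N; do !split => //; first by rewrite expn_gt0.
by rewrite divr1.
Qed.

Lemma leq_exp2_trunc_log K m c : (0 < K)%N -> (c <= K + m)%N ->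
  (c <= 2 ^ ((K + 2) * trunc_log 2 (m + 2)))%N.
Proof.
move=> K_gt0 c_le; set L := trunc_log 2 (m + 2).
have L_gt0 : (0 < L)%N by apply: trunc_log_max => //; rewrite expn1 leq_addl.
have m2_le : (m + 2 <= 2 ^ (2 * L))%N.
  apply: leq_trans (ltnW (trunc_log_ltn (m + 2) (isT : (1 < 2)%N))) _.
  by rewrite leq_pexp2l // mul2n -addnn -add1n leq_add2r.
have K_le : (K <= 2 ^ (K * L))%N.
  apply: leq_trans (ltnW (ltn_expl K (isT : (1 < 2)%N))) _.
  by rewrite leq_pexp2l // leq_pmulr.
apply: (@leq_trans (K * (m + 2))); first by nia.
by rewrite mulnDl expnD leq_mul.
Qed.

Section NatValued.
Variable R : realType.

Definition nat_valued_vec (B : nat) {D : nat} (v : vec R D) : Prop :=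
  forall i, exists2 c, (c <= B)%N & v i = c%:R.

Definition nat_valued (B : nat) {D : nat} (vs : seq (vec R D)) : Prop :=
  forall k, nat_valued_vec B (nth (vzero D) vs k).

Lemma nat_valued_vzero B D : nat_valued_vec B (vzero D).
Proof. by move=> i; exists 0%N. Qed.

Lemma nat_valued_cat B D (vs1 vs2 : seq (vec R D)) :
  nat_valued B vs1 -> nat_valued B vs2 -> nat_valued B (vs1 ++ vs2).
Proof. by move=> nv1 nv2 k; rewrite nth_cat; case: ifP. Qed.

Lemma nat_valued_flatten_map B D (A : Type) (f : A -> seq (vec R D)) (r : seq A) :
  (forall a, nat_valued B (f a)) -> nat_valued B (flatten (map f r)).
Proof.
move=> nv; elim: r => [|a r IH] /=; last exact: nat_valued_cat.
by move=> k; rewrite nth_nil; apply: nat_valued_vzero.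
Qed.

Lemma nat_valued_map_iota B D m (f : nat -> vec R D) :
  (forall j, (j < m)%N -> nat_valued_vec B (f j)) -> nat_valued B [seq f j | j <- iota 0 m].
Proof.
move=> nv k; have [km|mk] := ltnP k m; first by rewrite nth_map_iota //; apply: nv.
by rewrite nth_default ?size_map ?size_iota //; apply: nat_valued_vzero.
Qed.

End NatValued.

Arguments nat_valued {R} B {D} vs.

Section NgramTransformer.
Variables (R : realType) (Sig : finType) (n : nat) (ng : ngram_params R Sig n).

Definition sym_code (b : option Sig) : nat := if b is Some s then (enum_rank s).+1 else 0.

Definition sym_decode (r : R) : option Sig :=
  odflt None [pick b : option Sig | (sym_code b)%:R == r].

Lemma sym_code_inj : injective sym_code.
Proof. by case=> [a|] [b|] //= [] /val_inj/enum_rank_inj ->. Qed.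

Lemma sym_code_le b : (sym_code b <= #|Sig|)%N.
Proof. by case: b => //= a; rewrite ltn_ord. Qed.

Lemma sym_codeK b : sym_decode (sym_code b)%:R = b.
Proof.
rewrite /sym_decode; case: pickP => [b'|/(_ b)]; last by rewrite eqxx.
by rewrite eqr_nat => /eqP/sym_code_inj ->.
Qed.

Definition ngram_width := (3 + n.-1)%N.
Definition sym_coord : 'I_ngram_width := @Ordinal ngram_width 0 isT.
Definition pos_coord : 'I_ngram_width := @Ordinal ngram_width 1 isT.
Definition attn_coord : 'I_ngram_width := @Ordinal ngram_width 2 isT.

(* Coordinate [attn_coord] is zero in the embedding, so after the residual
   connection it holds exactly the attended value. *)
Definition ngram_embed (b : option Sig) (j : nat) : vec R ngram_width :=
  fun i => if (i : nat) == 0%N then (sym_code b)%:R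
           else if (i : nat) == 1%N then j%:R else 0.

Definition lookback (i : 'I_n.-1) : nat := (n.-1 - i.+1)%N.

(* The output map rounds the attended value to a symbol code: at early
   positions no key matches, hardmax averages, and without rounding the head
   outputs would not stay small natural numbers. *)
Definition lookback_head (i : 'I_n.-1) : Defs.head R ngram_width :=
  Defs.Head R ngram_width id id (fun x _ => x sym_coord)
    (fun a idx => (sym_code (sym_decode (a attn_coord)))%:R - a idx)
    (fun q k => (q pos_coord == k pos_coord + (lookback i)%:R)%:R).

Definition combine_heads (zs : 'I_n.-1 -> vec R ngram_width) : vec R ngram_width :=
  fun idx => if insub (val idx) is Some k then zs k idx else 0.

Definition lookback_layer : layer R ngram_width :=
  Defs.Layer R ngram_width n.-1 lookback_head combine_heads.

Definition decode_history (x : vec R ngram_width) : (n.-1).-tuple (option Sig) :=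
  [tuple sym_decode (x (widen_ord (leq_addl 3 n.-1) i)) | i < n.-1].

Definition ngram_transformer : transformer R Sig :=
  Defs.Transformer R Sig ngram_width ngram_embed [:: lookback_layer]
    #|{: option Sig + option Sig}|
    (fun x j => logprob_feature (ng (decode_history x)) (enum_val j))
    (fun a j => logprob_weight a (enum_val j)).

Definition embed_seq w : seq (vec R ngram_width) := static_enc R Sig ngram_transformer w.

Lemma size_embed_seq w : size (embed_seq w) = size w.
Proof. exact: (size_static_enc _ _ ngram_transformer). Qed.

Lemma nth_embed_seq w j : (j < size w)%N ->
  nth (vzero ngram_width) (embed_seq w) j = ngram_embed (nth None w j) j.+1.
Proof. exact: (nth_static_enc _ _ ngram_transformer). Qed.

Lemma nth_head_lookback w (i : 'I_n.-1) idx :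
  (n.-1 <= size w)%N -> (0 < size w)%N ->
  nth (vzero _) (head_apply R (lookback_head i) (embed_seq w)) (size w).-1 idx
  = (sym_code (nth None w (size w - n.-1 + i)))%:R.
Proof.
move=> w_ge w_gt0; set s := (size w).-1; set j0 := (size w - n.-1 + i)%N.
have s_lt : (s < size w)%N by rewrite prednK.
have j0s : (j0 <= s)%N by rewrite /j0 /s; have := ltn_ord i; lia.
have j0_lt : (j0 < size w)%N := leq_ltn_trans j0s s_lt.
rewrite nth_head_apply /vadd /=; last by rewrite size_embed_seq.
set a := head_attn _ _ _ _; rewrite subrK {}/a.
rewrite (head_attn_argmax attn_coord j0s) => [|k ks kj0].
  by rewrite !nth_embed_seq //= /ngram_embed /= addr0 sym_codeK.
rewrite !nth_embed_seq //=; last exact: leq_ltn_trans ks s_lt.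
rewrite -!natrD !eqr_nat /lookback.
have -> : (s.+1 == k.+1 + (n.-1 - i.+1))%N = false.
  by apply/negbTE; move: kj0; rewrite /j0 /s; have := ltn_ord i; lia.
have -> : (s.+1 == j0.+1 + (n.-1 - i.+1))%N by rewrite /j0 /s; have := ltn_ord i; lia.
exact: ltr01.
Qed.

Local Notation final_vec w :=
  (last (vzero _) (run_layers R [:: lookback_layer] (embed_seq w))).

Lemma decode_history_final w : (n.-1 <= size w)%N -> (0 < size w)%N ->
  decode_history (final_vec w) = history Sig n w.
Proof.
move=> w_ge w_gt0.
rewrite last_run_layers1; last by rewrite size_embed_seq.
apply: eq_from_tnth => i; rewrite !tnth_mktuple /= /combine_heads /=.
rewrite (_ : insub _ = Some i) ?valK // size_embed_seq.
by rewrite nth_head_lookback // sym_codeK.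
Qed.

Lemma expE_logit_ngram w a : is_ngram_lm ng ->
  expE R (logit R Sig ngram_transformer w a) = ng (decode_history (final_vec w)) a.
Proof. by case=> ng_ge0 _; apply: expE_logprob. Qed.

Lemma tcond_ngram_pad y a : is_ngram_lm ng -> (2 <= n)%N ->
  tcond R Sig ngram_transformer (pad n y) a = ng (history Sig n (pad n y)) a.
Proof.
move=> ng_lm n_ge2; rewrite -decode_history_final ?size_pad; [|lia|lia].
by apply: tcond_eq_distr => [b|]; [apply: expE_logit_ngram | case: ng_lm].
Qed.

Lemma ngram_transformer_wf : is_ngram_lm ng -> transformer_wf ngram_transformer n.
Proof.
move=> ng_lm; split=> [a j|y]; first exact: logprob_weight_neq_pinfty.
split=> [a j|]; first exact: logprob_feature_ge0.
rewrite (eq_bigr _ (fun b _ => expE_logit_ngram (pad n y) b ng_lm)).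
by case: ng_lm => _ ->; rewrite ltr01.
Qed.

Lemma head_lookback_nat_valued B (i : 'I_n.-1) xs : (#|Sig| <= B)%N ->
  nat_valued B (head_apply R (lookback_head i) xs).
Proof.
move=> Sig_le; apply: nat_valued_map_iota => j _ idx.
by exists (sym_code (sym_decode (head_attn R (lookback_head i) xs j attn_coord)));
  [exact: leq_trans (sym_code_le _) Sig_le | rewrite /vadd /= subrK].
Qed.

Lemma ngram_reps_nat_valued w :
  nat_valued (#|Sig| + size w) (transformer_reps ngram_transformer w).
Proof.
have Sig_le : (#|Sig| <= #|Sig| + size w)%N by rewrite leq_addr.
apply: nat_valued_cat; [|apply: nat_valued_cat].
- apply: nat_valued_map_iota => j j_lt idx; rewrite /= /ngram_embed.
  case: ifP => _.
    by exists (sym_code (nth None w j)); first exact: leq_trans (sym_code_le _) Sig_le.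
  case: ifP => _; first by exists j.+1; rewrite // ltn_addl.
  by exists 0%N.
- by apply: nat_valued_flatten_map => h; apply: head_lookback_nat_valued.
- apply: nat_valued_map_iota => j _ idx; rewrite /= /combine_heads.
  case: insub => [k|]; last by exists 0%N.
  exact: head_lookback_nat_valued.
Qed.

End NgramTransformer.

Theorem theorem5p1 (R : realType) :
  exists C : nat,
  forall (Sig : finType), (0 < #|Sig|)%N ->
  forall (n : nat), (2 <= n)%N ->
  forall (ng : ngram_params R Sig n), is_ngram_lm ng ->
  exists T : transformer R Sig,
    transformer_wf T n /\
    (tD T <= C * (n * #|Sig|))%N /\
    (tD' T <= C * #|Sig| ^ n.-1)%N /\
    (forall y : seq Sig, tprob T n y = ngprob ng y) /\
    exists Cb : nat,
      forall (y : seq Sig) (t : nat), (t <= size y)%N ->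
      forall (k : nat), (k < size (transformer_reps T (pad n (take t y))))%N ->
      forall i, exists b : nat,
        (b <= Cb * trunc_log 2 (size y + 2))%N /\
        bits_repr b (nth (vzero (tD T)) (transformer_reps T (pad n (take t y))) k i).
Proof.
exists 4%N => Sig Sig_gt0 n n_ge2 ng ng_lm.
exists (ngram_transformer R Sig n ng).
split; first exact: ngram_transformer_wf.
split.
  by apply: (@leq_trans (4 * n)); [rewrite /= /ngram_width; lia | rewrite leq_mul2l leq_pmulr].
split.
  by apply: card_sum_option_le; lia.
split; first by move=> y; apply: eq_autoreg => y' a; exact: tcond_ngram_pad.
exists (#|Sig| + n + 2)%N => y t t_le k _ i.
have [c c_le ->] := ngram_reps_nat_valued R Sig n ng (pad n (take t y)) k i.
exists ((#|Sig| + n + 2) * trunc_log 2 (size y + 2))%N; split => //.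
apply/bits_repr_natr/leq_exp2_trunc_log; first lia.
by move: c_le; rewrite size_pad size_takel //; lia.
Qed.
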